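(* Consider the all-to-all Kuramoto model $\dot\theta_i=\omega_i+\frac KN\sum_{j=1}^N\sin(\theta_j-\theta_i)$, $i=1,\dots,N$, with $\omega_{\max}=\max_i\omega_i$, $\omega_{\min}=\min_i\omega_i$. Let $\epsilon\in(0,\pi/4)$ and $\mathcal D=\{\theta\in\mathbb R^N: |\theta_i-\theta_j|\le\frac\pi2-2\epsilon\ \forall i,j\}$. If $\theta(0)\in\mathcal D$ and $K>\frac{N(\omega_{\max}-\omega_{\min})}{2\cos(2\epsilon)}$, then the oscillators asymptotically frequency synchronize: $\dot\theta_i(t)-\dot\theta_j(t)\to0$ as $t\to\infty$ for all $i,j=1,\dots,N$. *)

From Stdlib Require Import Reals List.
From Coquelicot Require Import Coquelicot.
Open Scope R_scope.

(* Oscillators are indexed by 0, ..., N-1. *)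

(* max_i omega_i over i = 0..N-1 (meaningful for N >= 1). *)
Definition omega_max (N : nat) (omega : nat -> R) : R :=
  fold_right Rmax (omega 0%nat) (map omega (seq 0 N)).

(* min_i omega_i over i = 0..N-1 (meaningful for N >= 1). *)
Definition omega_min (N : nat) (omega : nat -> R) : R :=
  fold_right Rmin (omega 0%nat) (map omega (seq 0 N)).

Definition kuramoto_rhs (N : nat) (K : R) (omega : nat -> R)
  (th : nat -> R) (i : nat) : R :=
  omega i + K / INR N *
    fold_right Rplus 0 (map (fun j => sin (th j - th i)) (seq 0 N)).

Definition is_kuramoto_solution (N : nat) (K : R) (omega : nat -> R)
  (theta : nat -> R -> R) : Prop :=
  (forall i, (i < N)%nat ->
     filterlim (theta i) (at_right 0) (locally (theta i 0))) /\
  (forall i t, (i < N)%nat -> 0 < t ->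
     is_derive (theta i) t (kuramoto_rhs N K omega (fun j => theta j t) i)).

Definition in_D (N : nat) (eps : R) (th : nat -> R) : Prop :=
  forall i j, (i < N)%nat -> (j < N)%nat -> Rabs (th i - th j) <= PI / 2 - 2 * eps.

(* The set D is forward invariant: when a phase gap theta_a - theta_b reaches
   the bound pi/2 - 2 eps, every summand sin(theta_a - theta_j) + sin(theta_j - theta_b)
   is nonnegative and the summands j = a, b contribute 2 cos(2 eps), so the
   coupling condition on K makes the gap decrease.  Inside D all couplings
   cos(theta_j - theta_i) are at least c = cos(pi/2 - 2 eps) > 0.  The
   frequencies nu_i = theta_i' then obey the consensus dynamics
   nu_i' = K/N sum_j cos(theta_j - theta_i) (nu_j - nu_i), along which the
   frequency spread V = sum_{i,j} (nu_i - nu_j)^2 satisfies V' <= -2 K c V, so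
   V, and with it every nu_i - nu_j, decays exponentially. *)

From Stdlib Require Import Reals List Lra Lia Classical.
From Coquelicot Require Import Coquelicot.
Open Scope R_scope.

Definition lsum {A : Type} (l : list A) (f : A -> R) : R :=
  fold_right Rplus 0 (map f l).

Section ListSums.
Context {A : Type}.
Implicit Types (l : list A) (f g : A -> R).

Lemma lsum_nil f : lsum nil f = 0.
Proof. reflexivity. Qed.

Lemma lsum_cons a l f : lsum (a :: l) f = f a + lsum l f.
Proof. reflexivity. Qed.

Lemma lsum_ext l f g : (forall i, In i l -> f i = g i) -> lsum l f = lsum l g.
Proof.
  induction l as [|a l IH]; intros H; rewrite ?lsum_nil, ?lsum_cons; auto.
  rewrite H by now left.
  rewrite IH; [reflexivity | intros; apply H; now right].
Qed.

Lemma lsum_plus l f g : lsum l (fun i => f i + g i) = lsum l f + lsum l g.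
Proof. induction l; rewrite ?lsum_nil, ?lsum_cons; [lra|]. rewrite IHl; lra. Qed.

Lemma lsum_scal l c f : lsum l (fun i => c * f i) = c * lsum l f.
Proof. induction l; rewrite ?lsum_nil, ?lsum_cons; [lra|]. rewrite IHl; lra. Qed.

Lemma lsum_opp l f : lsum l (fun i => - f i) = - lsum l f.
Proof.
  rewrite (lsum_ext l _ (fun i => -1 * f i)) by (intros; ring).
  rewrite lsum_scal; ring.
Qed.

Lemma lsum_const l c : lsum l (fun _ => c) = INR (length l) * c.
Proof.
  induction l; rewrite ?lsum_nil, ?lsum_cons; simpl length; [simpl; lra|].
  rewrite IHl, S_INR; lra.
Qed.

Lemma lsum_le l f g : (forall i, In i l -> f i <= g i) -> lsum l f <= lsum l g.
Proof.
  induction l as [|a l IH]; intros H; rewrite ?lsum_nil, ?lsum_cons; [lra|].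
  apply Rplus_le_compat; [apply H; now left | apply IH; intros; apply H; now right].
Qed.

Lemma lsum_nonneg l f : (forall i, In i l -> 0 <= f i) -> 0 <= lsum l f.
Proof.
  intros H; replace 0 with (lsum l (fun _ => 0)) by (rewrite lsum_const; ring).
  now apply lsum_le.
Qed.

Lemma lsum_ge_term l f a : (forall i, In i l -> 0 <= f i) -> In a l -> f a <= lsum l f.
Proof.
  induction l as [|b l IH]; intros H Ha; [destruct Ha|]; rewrite lsum_cons.
  assert (0 <= lsum l f) by (apply lsum_nonneg; intros; apply H; now right).
  assert (0 <= f b) by (apply H; now left).
  destruct Ha as [<-|Ha]; [lra|].
  enough (f a <= lsum l f) by lra.
  apply IH; auto; intros; apply H; now right.
Qed.

Lemma lsum_ge_two_terms l f a b : NoDup l -> (forall i, In i l -> 0 <= f i) ->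
  In a l -> In b l -> a <> b -> f a + f b <= lsum l f.
Proof.
  induction l as [|c l IH]; intros Hl H Ha Hb Hab; [destruct Ha|]; rewrite lsum_cons.
  inversion Hl as [|? ? Hc Hl']; subst.
  assert (0 <= f c) by (apply H; now left).
  assert (H' : forall i, In i l -> 0 <= f i) by (intros; apply H; now right).
  destruct Ha as [<-|Ha], Hb as [<-|Hb].
  - congruence.
  - pose proof (lsum_ge_term l f b H' Hb); lra.
  - pose proof (lsum_ge_term l f a H' Ha); lra.
  - pose proof (IH Hl' H' Ha Hb Hab); lra.
Qed.

Lemma lsum_swap l1 l2 (F : A -> A -> R) :
  lsum l1 (fun i => lsum l2 (F i)) = lsum l2 (fun j => lsum l1 (fun i => F i j)).
Proof.
  induction l1; rewrite ?lsum_nil, ?lsum_cons.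
  - rewrite (lsum_ext l2 _ (fun _ => 0)) by reflexivity.
    rewrite lsum_const; ring.
  - rewrite IHl1, <- lsum_plus; apply lsum_ext; intros; now rewrite lsum_cons.
Qed.

Lemma lsum_antisym l (F : A -> A -> R) : (forall i j, F i j = - F j i) ->
  lsum l (fun i => lsum l (fun j => F i j)) = 0.
Proof.
  intros HF.
  assert (E : lsum l (fun i => lsum l (fun j => F i j))
            = - lsum l (fun i => lsum l (fun j => F i j))).
  { rewrite lsum_swap at 1; rewrite <- lsum_opp; apply lsum_ext; intros i _.
    rewrite <- lsum_opp; apply lsum_ext; intros j _; apply (HF j i). }
  lra.
Qed.

Lemma is_derive_lsum l (F : A -> R -> R) dF t :
  (forall i, In i l -> is_derive (F i) t (dF i)) ->
  is_derive (fun s => lsum l (fun i => F i s)) t (lsum l dF).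
Proof.
  induction l as [|a l IH]; intros H.
  - apply (is_derive_const (K := R_AbsRing) 0).
  - rewrite lsum_cons.
    apply (is_derive_plus (fun s => F a s) (fun s => lsum l (fun i => F i s))).
    + apply H; now left.
    + apply IH; intros; apply H; now right.
Qed.

Lemma lsum_pairwise_diff_mult l (x y : A -> R) :
  lsum l (fun i => lsum l (fun j => 2 * (x i - x j) * (y i - y j))) =
  4 * INR (length l) * lsum l (fun i => x i * y i) - 4 * lsum l x * lsum l y.
Proof.
  set (n := INR (length l)); set (P := lsum l (fun i => x i * y i)).
  rewrite (lsum_ext l _ (fun i => (2 * n) * (x i * y i) + (-2 * lsum l y) * x i
                                  + (-2 * lsum l x) * y i + 2 * P)).
  - rewrite !lsum_plus, !lsum_scal, lsum_const; fold n P; ring.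
  - intros i _.
    rewrite (lsum_ext l _ (fun j => 2 * (x i * y i) + (-2 * x i) * y j
                                    + (-2 * y i) * x j + 2 * (x j * y j))) by (intros; ring).
    rewrite !lsum_plus, !lsum_scal, lsum_const; fold n P; ring.
Qed.

End ListSums.

Section ConsensusDissipation.
Context {A : Type} (l : list A) (x y : A -> R) (C : A -> A -> R) (k c : R).
Hypothesis C_sym : forall i j, C i j = C j i.
Hypothesis y_consensus : forall i, y i = k * lsum l (fun j => C i j * (x j - x i)).

Lemma consensus_lsum_eq0 : lsum l y = 0.
Proof.
  rewrite (lsum_ext l y _ (fun i _ => y_consensus i)), lsum_scal, lsum_antisym.
  - ring.
  - intros i j; rewrite C_sym; ring.
Qed.

Lemma consensus_energy :
  lsum l (fun i => x i * y i) =
  - (k / 2) * lsum l (fun i => lsum l (fun j => C i j * (x i - x j) ^ 2)).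
Proof.
  (* x_i (x_j - x_i) = -(x_i - x_j)^2 / 2 + (x_j^2 - x_i^2) / 2, and the
     second part is antisymmetric once weighted by C. *)
  assert (Hanti : lsum l (fun i => lsum l (fun j => C i j * (x j ^ 2 - x i ^ 2) / 2)) = 0).
  { apply lsum_antisym; intros i j; rewrite C_sym; field. }
  rewrite (lsum_ext l _ (fun i => k * lsum l (fun j =>
             - (1 / 2) * (C i j * (x i - x j) ^ 2) + C i j * (x j ^ 2 - x i ^ 2) / 2))).
  - rewrite lsum_scal.
    rewrite (lsum_ext l _ (fun i => - (1 / 2) * lsum l (fun j => C i j * (x i - x j) ^ 2)
                                    + lsum l (fun j => C i j * (x j ^ 2 - x i ^ 2) / 2)))
      by (intros; rewrite lsum_plus, lsum_scal; reflexivity).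
    rewrite lsum_plus, Hanti, lsum_scal; field.
  - intros i _; rewrite y_consensus.
    transitivity (k * lsum l (fun j => x i * (C i j * (x j - x i)))); [rewrite lsum_scal; ring|].
    f_equal; apply lsum_ext; intros; field.
Qed.

Lemma consensus_dissipation :
  (forall i j, In i l -> In j l -> c <= C i j) -> 0 <= k ->
  lsum l (fun i => lsum l (fun j => 2 * (x i - x j) * (y i - y j))) <=
  - 2 * (k * INR (length l)) * c * lsum l (fun i => lsum l (fun j => (x i - x j) ^ 2)).
Proof.
  intros Hc Hk.
  rewrite lsum_pairwise_diff_mult, consensus_lsum_eq0, consensus_energy.
  assert (HQ : c * lsum l (fun i => lsum l (fun j => (x i - x j) ^ 2)) <=
               lsum l (fun i => lsum l (fun j => C i j * (x i - x j) ^ 2))).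
  { rewrite <- lsum_scal; apply lsum_le; intros i Hi.
    rewrite <- lsum_scal; apply lsum_le; intros j Hj.
    apply Rmult_le_compat_r; [apply pow2_ge_0 | auto]. }
  assert (0 <= k * INR (length l)) by (apply Rmult_le_pos; [lra | apply pos_INR]).
  nra.
Qed.

End ConsensusDissipation.

Section FilterLimits.
Context {T : Type} {F : (T -> Prop) -> Prop} {FF : Filter F}.

Lemma filterlim_Rplus (f g : T -> R) a b :
  filterlim f F (locally a) -> filterlim g F (locally b) ->
  filterlim (fun x => f x + g x) F (locally (a + b)).
Proof.
  intros Hf Hg; eapply filterlim_comp_2; [exact Hf | exact Hg |].
  apply (filterlim_plus (K := R_AbsRing) (V := R_NormedModule)).
Qed.

Lemma filterlim_Rminus (f g : T -> R) a b :
  filterlim f F (locally a) -> filterlim g F (locally b) ->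
  filterlim (fun x => f x - g x) F (locally (a - b)).
Proof.
  intros Hf Hg; apply filterlim_Rplus; [exact Hf|].
  eapply filterlim_comp; [exact Hg|].
  apply (filterlim_opp (K := R_AbsRing) (V := R_NormedModule)).
Qed.

Lemma filterlim_Rmult_l c (f : T -> R) a :
  filterlim f F (locally a) -> filterlim (fun x => c * f x) F (locally (c * a)).
Proof.
  intros Hf; eapply filterlim_comp; [exact Hf|].
  apply (filterlim_scal_r (K := R_AbsRing) (V := R_NormedModule)).
Qed.

Lemma filterlim_lsum {A : Type} (l : list A) (G : A -> T -> R) (L : A -> R) :
  (forall i, In i l -> filterlim (G i) F (locally (L i))) ->
  filterlim (fun x => lsum l (fun i => G i x)) F (locally (lsum l L)).
Proof.
  induction l as [|a l IH]; intros H.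
  - apply filterlim_const.
  - apply filterlim_Rplus; [apply H; now left | apply IH; intros; apply H; now right].
Qed.

Lemma filter_forall_lt n (P : nat -> T -> Prop) :
  (forall k, (k < n)%nat -> F (P k)) -> F (fun x => forall k, (k < n)%nat -> P k x).
Proof.
  induction n as [|n IH]; intros H.
  - apply filter_forall; intros; lia.
  - apply (filter_imp (fun x => (forall k, (k < n)%nat -> P k x) /\ P n x)).
    + intros x [Hx Hn] k Hk.
      destruct (Nat.eq_dec k n) as [->|]; [exact Hn | apply Hx; lia].
    + apply filter_and; [apply IH; intros; apply H; lia | apply H; lia].
Qed.

End FilterLimits.

Lemma locally_lt l c : l < c -> locally l (fun y => y < c).
Proof. intros H; apply (locally_open _ _ (open_lt c)); auto. Qed.

Lemma locally_gt l c : c < l -> locally l (fun y => c < y).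
Proof. intros H; apply (locally_open _ _ (open_gt c)); auto. Qed.

Lemma at_right_ex t (P : R -> Prop) :
  at_right t P -> exists d, 0 < d /\ forall s, t < s < t + d -> P s.
Proof.
  intros [d Hd]; exists d; split; [apply cond_pos|].
  intros s Hs; apply Hd; [|lra].
  change (Rabs (s - t) < d); rewrite Rabs_right; lra.
Qed.

Lemma is_derive_continuous (f : R -> R) x l : is_derive f x l -> continuous f x.
Proof.
  intros H; apply (ex_derive_continuous (K := R_AbsRing) (V := R_NormedModule)).
  now exists l.
Qed.

Lemma is_derive_right_lim (f : R -> R) x l :
  is_derive f x l -> filterlim f (at_right x) (locally (f x)).
Proof.
  intros H; eapply filterlim_filter_le_1; [apply filter_le_within|].
  eapply is_derive_continuous, H.
Qed.

(* Only right continuity at [a] is assumed, as the ODE holds just for [t > 0]. *)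
Lemma derive_nonpos_le (f df : R -> R) a b : a < b ->
  filterlim f (at_right a) (locally (f a)) ->
  (forall x, a < x <= b -> is_derive f x (df x)) ->
  (forall x, a < x <= b -> df x <= 0) ->
  f b <= f a.
Proof.
  intros Hab Hc Hd Hneg.
  assert (Hint : forall y, a < y < b -> f b <= f y).
  { intros y Hy.
    destruct (MVT_gen f y b df) as [z [Hz E]]; rewrite Rmin_left, Rmax_right in * by lra.
    - intros x Hx; apply Hd; lra.
    - intros x Hx; apply continuity_pt_filterlim, (is_derive_continuous _ _ (df x)).
      apply Hd; lra.
    - assert (df z <= 0) by (apply Hneg; lra). nra. }
  apply Rnot_lt_le; intros Hlt.
  destruct (at_right_ex a (fun y => f y < f b)) as [d [Hd0 Hy]].
  { exact (Hc _ (locally_lt _ _ Hlt)). }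
  set (y := a + Rmin d (b - a) / 2).
  pose proof (Rmin_l d (b - a)); pose proof (Rmin_r d (b - a)).
  assert (0 < Rmin d (b - a)) by (apply Rmin_case; lra).
  specialize (Hy y ltac:(unfold y; lra)); specialize (Hint y ltac:(unfold y; lra)); lra.
Qed.

Lemma continuous_induction (P : R -> Prop) :
  P 0 ->
  (forall m, 0 < m -> (forall s, 0 <= s < m -> P s) -> P m) ->
  (forall t, 0 <= t -> P t -> at_right t P) ->
  forall T, 0 <= T -> P T.
Proof.
  intros H0 Hleft Hright T HT.
  set (E := fun x => 0 <= x <= T /\ forall s, 0 <= s <= x -> P s).
  assert (HE0 : E 0) by (split; [lra | intros s Hs; now replace s with 0 by lra]).
  destruct (completeness E) as [m [Hub Hlub]].
  { exists T; intros x [Hx _]; lra. }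
  { now exists 0. }
  assert (Hm0 : 0 <= m) by now apply Hub.
  assert (HmT : m <= T) by (apply Hlub; intros x [Hx _]; lra).
  assert (Hbelow : forall s, 0 <= s < m -> P s).
  { intros s Hs; apply NNPP; intros Hn.
    enough (m <= s) by lra.
    apply Hlub; intros x [_ Hx]; apply Rnot_lt_le; intros Hsx; apply Hn, Hx; lra. }
  assert (Hm : P m) by (destruct Hm0 as [Hm0| <-]; auto).
  destruct HmT as [HmT| ->]; [exfalso | exact Hm].
  destruct (at_right_ex m P (Hright m Hm0 Hm)) as [d [Hd Hd']].
  set (x := m + Rmin d (T - m) / 2).
  pose proof (Rmin_l d (T - m)); pose proof (Rmin_r d (T - m)).
  assert (0 < Rmin d (T - m)) by (apply Rmin_case; lra).
  assert (Hx : E x).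
  { split; [unfold x; lra|]; intros s Hs.
    destruct (Rlt_le_dec s m) as [|[Hms| <-]]; [apply Hbelow; lra | | exact Hm].
    apply Hd'; unfold x in Hs; lra. }
  pose proof (Hub x Hx); unfold x in *; lra.
Qed.

Lemma is_derive_sin_minus (u v : R -> R) t du dv :
  is_derive u t du -> is_derive v t dv ->
  is_derive (fun s => sin (u s - v s)) t (cos (u t - v t) * (du - dv)).
Proof.
  intros Hu Hv.
  assert (Huv : is_derive (fun s => u s - v s) t (du - dv)).
  { apply (is_derive_minus (K := R_AbsRing) (V := R_NormedModule)); auto. }
  assert (Hsin : is_derive sin (u t - v t) (cos (u t - v t))).
  { apply is_derive_Reals, derivable_pt_lim_sin. }
  rewrite Rmult_comm.
  exact (is_derive_comp (K := R_AbsRing) (V := R_NormedModule) sin _ t _ _ Hsin Huv).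
Qed.

Lemma cos_ge_of_abs_le x g : Rabs x <= g -> g <= PI -> cos g <= cos x.
Proof.
  intros H Hg.
  replace (cos x) with (cos (Rabs x))
    by (destruct (Rcase_abs x); [rewrite Rabs_left, cos_neg | rewrite Rabs_right]; auto).
  destruct H as [H| ->]; [|lra].
  left; apply cos_decreasing_1; pose proof (Rabs_pos x); lra.
Qed.

Lemma exp_weighted_nonincreasing (V : R -> R) a :
  (forall s, 0 < s -> exists dv, is_derive V s dv /\ dv <= - a * V s) ->
  forall s t, 0 < s <= t -> V t * exp (a * t) <= V s * exp (a * s).
Proof.
  intros HV s t [Hs [Hst| <-]]; [|lra].
  set (W := fun r => V r * exp (a * r)).
  assert (HW : forall r, 0 < r -> is_derive W r (Derive W r) /\ Derive W r <= 0).
  { intros r Hr; destruct (HV r Hr) as [dv [Hdv Hle]].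
    assert (HD : is_derive W r (dv * exp (a * r) + V r * (a * exp (a * r)))).
    { apply (is_derive_mult (K := R_AbsRing) V (fun r => exp (a * r))); auto.
      - auto_derive; [constructor | ring].
      - intros; apply Rmult_comm. }
    rewrite (is_derive_unique _ _ _ HD); split; auto.
    pose proof (exp_pos (a * r)); nra. }
  apply (derive_nonpos_le W (Derive W) s t Hst).
  - apply (is_derive_right_lim _ _ (Derive W s)), HW, Hs.
  - intros x Hx; apply HW; lra.
  - intros x Hx; apply HW; lra.
Qed.

Lemma is_lim_0_of_sqr_le_exp (f : R -> R) A a : 0 < a ->
  (forall t, 1 < t -> f t ^ 2 <= A * exp (- (a * t))) -> is_lim f p_infty 0.
Proof.
  intros Ha Hf.
  assert (Hexp : is_lim (fun t => A * exp (- (a * t))) p_infty 0).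
  { replace (Finite 0) with (Rbar_mult A 0) by (simpl; f_equal; ring).
    apply is_lim_scal_l, (is_lim_comp exp (fun t => - (a * t)) p_infty 0 m_infty).
    - apply is_lim_exp_m.
    - replace m_infty with (Rbar_opp (Rbar_mult a p_infty))
        by (simpl; destruct (Rle_dec 0 a) as [H|]; [destruct (Rle_lt_or_eq_dec 0 a H)|];
            simpl; auto; lra).
      apply is_lim_opp, is_lim_scal_l, is_lim_id.
    - exists 0; intros; discriminate. }
  apply is_lim_spec; intros e; apply is_lim_spec in Hexp.
  destruct (Hexp (mkposreal (e * e) (Rmult_lt_0_compat _ _ (cond_pos e) (cond_pos e))))
    as [M HM]; simpl in HM.
  exists (Rmax 1 M); intros t Ht.
  specialize (HM t (Rle_lt_trans _ _ _ (Rmax_r 1 M) Ht)).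
  specialize (Hf t (Rle_lt_trans _ _ _ (Rmax_l 1 M) Ht)).
  rewrite Rminus_0_r in *; rewrite <- pow2_abs in Hf.
  apply Rabs_def2 in HM; pose proof (cond_pos e); pose proof (Rabs_pos (f t)); nra.
Qed.

Lemma fold_Rmax_ge (w : nat -> R) l x0 a : In a l -> w a <= fold_right Rmax x0 (map w l).
Proof.
  induction l; intros Ha; [destruct Ha|]; destruct Ha as [->|Ha]; simpl; [apply Rmax_l|].
  eapply Rle_trans; [apply IHl, Ha | apply Rmax_r].
Qed.

Lemma fold_Rmin_le (w : nat -> R) l x0 a : In a l -> fold_right Rmin x0 (map w l) <= w a.
Proof.
  induction l; intros Ha; [destruct Ha|]; destruct Ha as [->|Ha]; simpl; [apply Rmin_l|].
  eapply Rle_trans; [apply Rmin_r | apply IHl, Ha].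
Qed.

Lemma in_seq0 n a : (a < n)%nat -> In a (seq 0 n).
Proof. intros; apply in_seq; lia. Qed.

Lemma omega_diff_le N (w : nat -> R) a b : (a < N)%nat -> (b < N)%nat ->
  w a - w b <= omega_max N w - omega_min N w.
Proof.
  intros Ha Hb; unfold omega_max, omega_min.
  pose proof (fold_Rmax_ge w (seq 0 N) (w 0%nat) a (in_seq0 N a Ha)).
  pose proof (fold_Rmin_le w (seq 0 N) (w 0%nat) b (in_seq0 N b Hb)); lra.
Qed.

Lemma kuramoto_rhs_diff N K w th a b :
  kuramoto_rhs N K w th a - kuramoto_rhs N K w th b =
  w a - w b - K / INR N * lsum (seq 0 N) (fun j => sin (th a - th j) + sin (th j - th b)).
Proof.
  unfold kuramoto_rhs; fold (lsum (seq 0 N) (fun j => sin (th j - th a))).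
  fold (lsum (seq 0 N) (fun j => sin (th j - th b))).
  rewrite lsum_plus.
  rewrite (lsum_ext _ (fun j => sin (th a - th j)) (fun j => - sin (th j - th a)))
    by (intros; rewrite <- sin_neg; f_equal; ring).
  rewrite lsum_opp; ring.
Qed.

Lemma filterlim_kuramoto_rhs {T : Type} {F : (T -> Prop) -> Prop} {FF : Filter F}
  N K w (th : T -> nat -> R) th0 i :
  (forall k, (k < N)%nat -> filterlim (fun x => th x k) F (locally (th0 k))) -> (i < N)%nat ->
  filterlim (fun x => kuramoto_rhs N K w (th x) i) F (locally (kuramoto_rhs N K w th0 i)).
Proof.
  intros H Hi; apply filterlim_Rplus; [apply filterlim_const|].
  apply filterlim_Rmult_l, (filterlim_lsum _ (fun j x => sin (th x j - th x i))).
  intros j Hj; apply in_seq in Hj.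
  eapply filterlim_comp; [apply filterlim_Rminus; apply H; lia | apply continuous_sin].
Qed.

Section Kuramoto.
Variables (N : nat) (K eps : R) (omega : nat -> R).
Hypothesis N_pos : (1 <= N)%nat.
Hypothesis eps_range : 0 < eps < PI / 4.
Hypothesis K_large :
  K > INR N * (omega_max N omega - omega_min N omega) / (2 * cos (2 * eps)).

Lemma coupling_facts :
  0 < K /\ omega_max N omega - omega_min N omega < 2 * K * cos (2 * eps) / INR N.
Proof.
  pose proof PI_RGT_0.
  assert (Hc : 0 < cos (2 * eps)) by (apply cos_gt_0; lra).
  assert (HNp : 0 < INR N) by (apply lt_0_INR; lia).
  pose proof (omega_diff_le N omega 0 0 ltac:(lia) ltac:(lia)).
  set (D := omega_max N omega - omega_min N omega) in *.
  assert (HK' : INR N * D < K * (2 * cos (2 * eps))).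
  { apply (Rmult_lt_compat_r (2 * cos (2 * eps))) in K_large; [|lra].
    unfold Rdiv in K_large; rewrite Rmult_assoc, Rinv_l, Rmult_1_r in K_large; lra. }
  split; [nra|].
  apply (Rmult_lt_reg_l (INR N)); auto.
  replace (INR N * (2 * K * cos (2 * eps) / INR N)) with (K * (2 * cos (2 * eps)))
    by (field; lra); lra.
Qed.

Lemma rhs_diff_neg_at_boundary th a b : in_D N eps th -> (a < N)%nat -> (b < N)%nat ->
  th a - th b = PI / 2 - 2 * eps -> kuramoto_rhs N K omega th a - kuramoto_rhs N K omega th b < 0.
Proof.
  intros HD Ha Hb Hab.
  destruct coupling_facts as [HK0 Hw].
  pose proof PI_RGT_0.
  assert (HNp : 0 < INR N) by (apply lt_0_INR; lia).
  assert (Hne : a <> b) by (intros ->; lra).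
  rewrite kuramoto_rhs_diff.
  set (S := lsum (seq 0 N) (fun j => sin (th a - th j) + sin (th j - th b))).
  assert (HS : 2 * cos (2 * eps) <= S).
  { assert (Hnn : forall j, In j (seq 0 N) -> 0 <= sin (th a - th j) + sin (th j - th b)).
    { intros j Hj; apply in_seq in Hj.
      pose proof (HD j b ltac:(lia) Hb); pose proof (HD a j Ha ltac:(lia)).
      pose proof (Rle_abs (th j - th b)); pose proof (Rle_abs (th a - th j)).
      apply Rplus_le_le_0_compat; apply sin_ge_0; lra. }
    pose proof (lsum_ge_two_terms _ _ a b (seq_NoDup N 0) Hnn (in_seq0 N a Ha) (in_seq0 N b Hb) Hne)
      as H2.
    cbv beta in H2; rewrite !Rminus_diag, sin_0, Hab, sin_shift in H2; fold S in H2; lra. }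
  pose proof (omega_diff_le N omega a b Ha Hb).
  assert (2 * K * cos (2 * eps) / INR N <= K / INR N * S).
  { replace (2 * K * cos (2 * eps) / INR N) with (K / INR N * (2 * cos (2 * eps)))
      by (field; lra).
    apply Rmult_le_compat_l; [apply Rlt_le, Rdiv_lt_0_compat|]; auto. }
  lra.
Qed.

Variable theta : nat -> R -> R.
Hypothesis theta_sol : is_kuramoto_solution N K omega theta.
Hypothesis theta0_in_D : in_D N eps (fun i => theta i 0).

Lemma theta_right_continuous k t : (k < N)%nat -> 0 <= t ->
  filterlim (theta k) (at_right t) (locally (theta k t)).
Proof.
  destruct theta_sol as [H0 H1]; intros Hk [Ht| <-]; [|auto].
  eapply is_derive_right_lim, H1; auto.
Qed.

Lemma gap_eventually_le t a b : 0 <= t -> in_D N eps (fun i => theta i t) ->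
  (a < N)%nat -> (b < N)%nat -> at_right t (fun s => theta a s - theta b s <= PI / 2 - 2 * eps).
Proof.
  intros Ht HD Ha Hb.
  assert (Hlim : filterlim (fun s => theta a s - theta b s) (at_right t)
                   (locally (theta a t - theta b t))).
  { apply filterlim_Rminus; apply theta_right_continuous; auto. }
  assert (Hle : theta a t - theta b t <= PI / 2 - 2 * eps).
  { pose proof (HD a b Ha Hb); pose proof (Rle_abs (theta a t - theta b t)); simpl in *; lra. }
  destruct Hle as [Hlt|Heq].
  - apply (filter_imp (fun s => theta a s - theta b s < PI / 2 - 2 * eps)); [intros; lra|].
    exact (Hlim _ (locally_lt _ _ Hlt)).
  - set (dgap := fun s => kuramoto_rhs N K omega (fun j => theta j s) a
                      - kuramoto_rhs N K omega (fun j => theta j s) b).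
    assert (Hneg : at_right t (fun s => dgap s < 0)).
    { assert (Hdlim : filterlim dgap (at_right t)
                        (locally (kuramoto_rhs N K omega (fun j => theta j t) a
                                  - kuramoto_rhs N K omega (fun j => theta j t) b))).
      { apply filterlim_Rminus; apply (filterlim_kuramoto_rhs N K omega (fun s j => theta j s));
          auto; intros; apply theta_right_continuous; auto. }
      exact (Hdlim _ (locally_lt _ _ (rhs_diff_neg_at_boundary _ a b HD Ha Hb Heq))). }
    destruct (at_right_ex _ _ Hneg) as [d [Hd Hd']].
    exists (mkposreal d Hd); intros s Hs Hts; rewrite <- Heq.
    change (Rabs (s - t) < d) in Hs; apply Rabs_def2 in Hs.
    apply (derive_nonpos_le _ dgap t s Hts Hlim).
    + intros x Hx; destruct theta_sol as [_ H1].
      apply (is_derive_minus (K := R_AbsRing) (V := R_NormedModule)); apply H1; auto; lra.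
    + intros x Hx; apply Rlt_le, Hd'; lra.
Qed.

Lemma in_D_invariant T : 0 <= T -> in_D N eps (fun i => theta i T).
Proof.
  revert T; apply (continuous_induction (fun t => in_D N eps (fun i => theta i t))); auto.
  - intros m Hm Hbelow a b Ha Hb; simpl; apply Rnot_lt_le; intros Hgt.
    assert (Hc : continuous (fun s => Rabs (theta a s - theta b s)) m).
    { destruct theta_sol as [_ H1]; apply continuous_Rabs_comp.
      eapply is_derive_continuous.
      apply (is_derive_minus (K := R_AbsRing) (V := R_NormedModule)); apply H1; auto. }
    destruct (Hc _ (locally_gt _ _ Hgt)) as [d Hd].
    set (s := m - Rmin d m / 2).
    pose proof (Rmin_l d m); pose proof (Rmin_r d m); pose proof (cond_pos d).
    assert (0 < Rmin d m) by (apply Rmin_case; lra).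
    assert (Hs : ball m d s) by (change (Rabs (s - m) < d); unfold s; rewrite Rabs_left; lra).
    pose proof (Hd s Hs); pose proof (Hbelow s ltac:(unfold s; lra) a b Ha Hb); simpl in *; lra.
  - intros t Ht HD.
    apply (filter_imp (F := at_right t) (fun s => forall a, (a < N)%nat -> forall b, (b < N)%nat ->
                                          theta a s - theta b s <= PI / 2 - 2 * eps)).
    + intros s Hs a b Ha Hb; simpl.
      pose proof (Hs a Ha b Hb); pose proof (Hs b Hb a Ha); apply Rabs_le; lra.
    + apply filter_forall_lt; intros a Ha; apply (filter_forall_lt (F := at_right t)).
      intros b Hb; apply gap_eventually_le; auto.
Qed.

Definition freq i s := kuramoto_rhs N K omega (fun j => theta j s) i.

Lemma is_derive_freq i s : (i < N)%nat -> 0 < s ->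
  is_derive (freq i) s
    (K / INR N * lsum (seq 0 N) (fun j => cos (theta j s - theta i s) * (freq j s - freq i s))).
Proof.
  destruct theta_sol as [_ H1]; intros Hi Hs.
  rewrite <- (Rplus_0_l (K / INR N * _)).
  apply (is_derive_plus (fun _ => omega i)); [apply is_derive_Reals, derivable_pt_lim_const|].
  apply is_derive_scal, (is_derive_lsum _ (fun j s => sin (theta j s - theta i s))).
  intros j Hj; apply in_seq in Hj; apply is_derive_sin_minus; apply H1; auto; lia.
Qed.

Definition freq_spread s :=
  lsum (seq 0 N) (fun i => lsum (seq 0 N) (fun j => (freq i s - freq j s) ^ 2)).

Lemma sqr_freq_diff_le_spread i j s : (i < N)%nat -> (j < N)%nat ->
  (freq i s - freq j s) ^ 2 <= freq_spread s.
Proof.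
  intros Hi Hj; eapply Rle_trans; [|apply (lsum_ge_term _ _ i)].
  - apply (lsum_ge_term _ (fun j' => (freq i s - freq j' s) ^ 2) j); [|apply in_seq0, Hj].
    intros; apply pow2_ge_0.
  - intros; apply lsum_nonneg; intros; apply pow2_ge_0.
  - apply in_seq0, Hi.
Qed.

Lemma decay_rate_pos : 0 < 2 * K * cos (PI / 2 - 2 * eps).
Proof.
  destruct coupling_facts as [HK0 _]; pose proof PI_RGT_0.
  assert (0 < cos (PI / 2 - 2 * eps)) by (apply cos_gt_0; lra).
  nra.
Qed.

Lemma freq_spread_derive_le s : 0 < s ->
  exists dv, is_derive freq_spread s dv /\ dv <= - (2 * K * cos (PI / 2 - 2 * eps)) * freq_spread s.
Proof.
  intros Hs.
  set (dfreq i := K / INR N * lsum (seq 0 N)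
                    (fun j => cos (theta j s - theta i s) * (freq j s - freq i s))).
  exists (lsum (seq 0 N) (fun i => lsum (seq 0 N)
            (fun j => 2 * (freq i s - freq j s) * (dfreq i - dfreq j)))).
  split.
  - apply (is_derive_lsum _ (fun i s => lsum (seq 0 N) (fun j => (freq i s - freq j s) ^ 2))).
    intros i Hi; apply (is_derive_lsum _ (fun j s => (freq i s - freq j s) ^ 2)).
    intros j Hj; apply in_seq in Hi; apply in_seq in Hj.
    replace (2 * (freq i s - freq j s) * (dfreq i - dfreq j))
      with (INR 2 * (dfreq i - dfreq j) * (freq i s - freq j s) ^ 1) by (simpl; ring).
    apply (is_derive_pow (fun s => freq i s - freq j s)).
    apply (is_derive_minus (K := R_AbsRing) (V := R_NormedModule)); apply is_derive_freq; auto; lia.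
  - pose proof PI_RGT_0; destruct coupling_facts as [HK0 _].
    assert (HNp : 0 < INR N) by (apply lt_0_INR; lia).
    replace (- (2 * K * cos (PI / 2 - 2 * eps)))
      with (- 2 * (K / INR N * INR (length (seq 0 N))) * cos (PI / 2 - 2 * eps)) by (rewrite length_seq; field; lra).
    apply (consensus_dissipation _ _ _ (fun i j => cos (theta j s - theta i s))).
    + intros i j; rewrite <- cos_neg; f_equal; ring.
    + reflexivity.
    + intros i j Hi Hj; apply in_seq in Hi; apply in_seq in Hj.
      apply cos_ge_of_abs_le; [apply (in_D_invariant s); [lra | lia | lia] | lra].
    + apply Rlt_le, Rdiv_lt_0_compat; auto.
Qed.

End Kuramoto.

Theorem mainTheorem10 (N : nat) (K eps : R) (omega : nat -> R)
  (theta : nat -> R -> R) :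
  (1 <= N)%nat ->
  0 < eps < PI / 4 ->
  is_kuramoto_solution N K omega theta ->
  in_D N eps (fun i => theta i 0) ->
  K > INR N * (omega_max N omega - omega_min N omega) / (2 * cos (2 * eps)) ->
  forall i j, (i < N)%nat -> (j < N)%nat ->
    is_lim (fun t => Derive (theta i) t - Derive (theta j) t) p_infty 0.
Proof.
  intros HN He Hsol H0 HK i j Hi Hj.
  set (a := 2 * K * cos (PI / 2 - 2 * eps)).
  apply (is_lim_ext_loc (fun t => freq N K omega theta i t - freq N K omega theta j t)).
  { exists 0; intros t Ht; destruct Hsol as [_ H1].
    now rewrite (is_derive_unique _ _ _ (H1 i t Hi Ht)), (is_derive_unique _ _ _ (H1 j t Hj Ht)). }
  apply (is_lim_0_of_sqr_le_exp _ (freq_spread N K omega theta 1 * exp (a * 1)) a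
           (decay_rate_pos N K eps omega HN He HK)).
  intros t Ht.
  pose proof (exp_weighted_nonincreasing _ a
                (freq_spread_derive_le N K eps omega HN He HK theta Hsol H0) 1 t ltac:(lra)).
  eapply Rle_trans; [apply sqr_freq_diff_le_spread; auto|].
  replace (freq_spread N K omega theta t)
    with (freq_spread N K omega theta t * exp (a * t) * exp (- (a * t)))
    by (rewrite Rmult_assoc, <- exp_plus, Rplus_opp_r, exp_0; ring).
  apply Rmult_le_compat_r; [left; apply exp_pos | assumption].
Qed.
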